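(* Let $1\leq p<q$ be integers and let $G=\langle a,t\mid ta^pt^{-1}=a^q\rangle$ be the Baumslag--Solitar group $BS(p,q)$. Every element $x\in G$ can be written uniquely as $x=w(a,t)a^N$, where $N\in\mathbb Z$ and $w(a,t)$ is a freely reduced word belonging to $\{t,at,\ldots,a^{q-1}t,\,t^{-1},at^{-1},\ldots,a^{p-1}t^{-1}\}^*$. There exist constants $C_1,C_2,D_1,D_2>0$ such that for every $x\in G$ with this normal form $x=w(a,t)a^N$, $$C_1\bigl(|w|+\log(|N|+1)\bigr)-D_1\leq \|x\|\leq C_2\bigl(|w|+\log(|N|+1)\bigr)+D_2,$$ where $|w|$ is the number of letters of $w$ as a word over $\{a^{\pm1},t^{\pm1}\}$ and $\|x\|$ is the word length of $x$ with respect to the generating set $\{a,t\}$.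
   Context: $X^*$ denotes the set of finite concatenations of words from $X$. The base of the logarithm is any fixed base greater than $1$. *)

(* Baumslag--Solitar group BS(p,q) = <a,t | t a^p t^-1 = a^q>,
   modelled as words over {a, a^-1, t, t^-1} modulo the congruence generated
   by free cancellation and the defining relator. *)
From Stdlib Require Import Reals Lia List ZArith ClassicalEpsilon.
Import ListNotations.
Open Scope R_scope.

Inductive letter : Type := A | Ai | T | Ti.

Definition word := list letter.

Inductive bs_eq (p q : nat) : word -> word -> Prop :=
| bs_refl : forall u, bs_eq p q u u
| bs_sym : forall u v, bs_eq p q u v -> bs_eq p q v u
| bs_trans : forall u v w, bs_eq p q u v -> bs_eq p q v w -> bs_eq p q u w
| bs_ctx : forall l r u v, bs_eq p q u v -> bs_eq p q (l ++ u ++ r) (l ++ v ++ r)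
| bs_cancel_a : bs_eq p q [A; Ai] []
| bs_cancel_ai : bs_eq p q [Ai; A] []
| bs_cancel_t : bs_eq p q [T; Ti] []
| bs_cancel_ti : bs_eq p q [Ti; T] []
| bs_rel : bs_eq p q ([T] ++ repeat A p ++ [Ti]) (repeat A q).

Definition is_word_length (p q : nat) (u : word) (n : nat) : Prop :=
  (exists v, bs_eq p q u v /\ length v = n) /\
  (forall v, bs_eq p q u v -> (n <= length v)%nat).

(* ||u||: the word length of the element represented by u (it exists and is
   unique, as a minimum of a nonempty set of naturals) *)
Definition wlen (p q : nat) (u : word) : nat :=
  epsilon (inhabits 0%nat) (fun n => is_word_length p q u n).

Definition apow (N : Z) : word :=
  if (0 <=? N)%Z then repeat A (Z.to_nat N) else repeat Ai (Z.to_nat (- N)).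

Definition block : Type := (bool * nat)%type.

Definition block_word (b : block) : word :=
  match b with
  | (true, i) => repeat A i ++ [T]
  | (false, i) => repeat A i ++ [Ti]
  end.

Definition blocks_word (bs : list block) : word := concat (map block_word bs).

Definition block_ok (p q : nat) (b : block) : Prop :=
  match b with
  | (true, i) => (i < q)%nat
  | (false, i) => (i < p)%nat
  end.

Definition inv_letter (x : letter) : letter :=
  match x with A => Ai | Ai => A | T => Ti | Ti => T end.

Definition freely_reduced (u : word) : Prop :=
  forall l r x y, u = l ++ x :: y :: r -> y <> inv_letter x.

Definition normal_blocks (p q : nat) (bs : list block) : Prop :=
  Forall (block_ok p q) bs /\ freely_reduced (blocks_word bs).

From Stdlib Require Import Bool Reals List ZArith Lia Lra Morphisms Sorted Wf_nat.
From Stdlib Require Import Classical ClassicalEpsilon.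
Import ListNotations.

(* A state (blocks, N) encodes the word w a^N.  Right multiplication by the
   generators acts on states: a^(+-1) changes N, while t^(+-1) writes N = m k + i
   with 0 <= i < m (m = q for t, p for t^-1), rewrites a^N t^(+-1) as
   a^i t^(+-1) a^(m' k) (m' = p resp. q), and then either cancels the block
   a^i t^(+-1) against the last block or appends it.  This action respects free
   cancellation and the relator, so it is an action of BS(p,q).  The state reached
   from the empty state along u represents u, and a normal form word leads to its
   own normal form: this gives existence and uniqueness.

   Along a geodesic each generator adds at most one block and multiplies |N| + 1
   by at most q, whence |w| + log(|N| + 1) = O(||x||).  Conversely
   a^n = t a^(p (n / q)) t^-1 a^(n mod q) shrinks the exponent by the factor p / q
   at the cost of q + 2 letters, so a^N has a word of length O(log(|N| + 1)). *)

Lemma Z_div_mod_mul_add m k i : (0 <= i < m)%Z -> ((m * k + i) / m = k /\ (m * k + i) mod m = i)%Z.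
Proof.
  intro Hi; split; symmetry; [eapply Z.div_unique_pos | eapply Z.mod_unique_pos]; eauto.
Qed.

Lemma Z_abs_div_le N m : (0 < m)%Z -> (Z.abs (N / m) <= Z.abs N)%Z.
Proof.
  intro Hm; assert (E := Z.div_mod N m ltac:(lia)); assert (B := Z.mod_pos_bound N m Hm).
  destruct (Z.le_gt_cases 0 (N / m)); nia.
Qed.

Lemma ln_le x y : (0 < x -> x <= y -> ln x <= ln y)%R.
Proof.
  intros Hx Hxy; destruct (Rle_lt_or_eq_dec _ _ Hxy) as [H | <-];
    [left; apply ln_increasing | right]; auto.
Qed.
Lemma ln_abs_add_1_nonneg N : (0 <= ln (IZR (Z.abs N) + 1))%R.
Proof.
  rewrite <- ln_1; apply ln_le; [lra |].
  pose proof (IZR_le 0 _ (Z.abs_nonneg N)); lra.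
Qed.

Definition tletter (c : bool) : letter := if c then T else Ti.

Lemma block_word_tletter c i : block_word (c, i) = repeat A i ++ [tletter c].
Proof. destruct c; reflexivity. Qed.

Lemma blocks_word_app l1 l2 : blocks_word (l1 ++ l2) = blocks_word l1 ++ blocks_word l2.
Proof. unfold blocks_word; rewrite map_app; apply concat_app. Qed.

Lemma blocks_word_cons b bs : blocks_word (b :: bs) = block_word b ++ blocks_word bs.
Proof. reflexivity. Qed.

Lemma freely_reduced_cons x u : freely_reduced (x :: u) <->
  (match u with [] => True | y :: _ => y <> inv_letter x end) /\ freely_reduced u.
Proof.
  split.
  - intro H; split.
    + destruct u as [|y u]; [exact I | exact (H [] u x y eq_refl)].
    + intros l r a b E; apply (H (x :: l) r a b); rewrite E; reflexivity.
  - intros [Hx Hu] [|z l] r a b E; injection E; intros; subst; [exact Hx | eapply Hu; eauto].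
Qed.

Lemma freely_reduced_repeat_A i c w :
  freely_reduced (repeat A i ++ tletter c :: w) <-> freely_reduced (tletter c :: w).
Proof.
  induction i as [|i IH]; [reflexivity |]; cbn [repeat app].
  rewrite freely_reduced_cons, IH.
  assert (match repeat A i ++ tletter c :: w with [] => True | y :: _ => y <> inv_letter A end)
    by (destruct i, c; discriminate).
  tauto.
Qed.

(** Block [b'] may follow block [b] without free cancellation. *)
Definition no_cancel (b b' : block) : Prop := snd b' = 0%nat -> fst b' = fst b.

Lemma LocallySorted_cons2 {X} (R : X -> X -> Prop) a b l :
  LocallySorted R (a :: b :: l) <-> R a b /\ LocallySorted R (b :: l).
Proof. split; [intro H; inversion H; auto | intros [? ?]; constructor; auto]. Qed.

Lemma LocallySorted_app2 {X} (R : X -> X -> Prop) l a b :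
  LocallySorted R (l ++ [a; b]) <-> LocallySorted R (l ++ [a]) /\ R a b.
Proof.
  induction l as [|x [|y l] IH]; cbn [app] in *.
  - rewrite LocallySorted_cons2; intuition constructor.
  - rewrite !LocallySorted_cons2; intuition constructor.
  - rewrite !(LocallySorted_cons2 R x y), IH; tauto.
Qed.

Lemma freely_reduced_blocks_word bs :
  freely_reduced (blocks_word bs) <-> LocallySorted no_cancel bs.
Proof.
  induction bs as [|[c i] bs IH].
  - split; [constructor | intros _ [|] r x y E; discriminate].
  - rewrite blocks_word_cons, block_word_tletter, <- app_assoc; cbn [app].
    rewrite freely_reduced_repeat_A, freely_reduced_cons, IH.
    destruct bs as [|[c' i'] bs'].
    { cbn; split; [intros _; apply LSorted_cons1 | split; [exact I | constructor]]. }
    rewrite LocallySorted_cons2, blocks_word_cons, block_word_tletter, <- app_assoc.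
    enough (match repeat A i' ++ tletter c' :: blocks_word bs' with
            | [] => True | y :: _ => y <> inv_letter (tletter c) end
            <-> no_cancel (c, i) (c', i')) by tauto.
    unfold no_cancel; destruct i'; cbn.
    + destruct c, c'; cbn; intuition congruence.
    + destruct c; split; intros; discriminate || lia.
Qed.

Lemma normal_blocks_iff p q bs :
  normal_blocks p q bs <-> Forall (block_ok p q) bs /\ LocallySorted no_cancel bs.
Proof. unfold normal_blocks; rewrite freely_reduced_blocks_word; reflexivity. Qed.

Section BaumslagSolitar.
Variables p q : nat.
Hypothesis hp : (1 <= p)%nat.
Hypothesis hpq : (p < q)%nat.

Local Notation "u =~ v" := (bs_eq p q u v) (at level 70).

Global Instance bs_eq_Equivalence : Equivalence (bs_eq p q).
Proof. split; [exact (bs_refl p q) | exact (bs_sym p q) | exact (bs_trans p q)]. Qed.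

Global Instance app_bs_eq_Proper :
  Proper (bs_eq p q ==> bs_eq p q ==> bs_eq p q) (@app letter).
Proof.
  intros u u' Hu v v' Hv; transitivity (u' ++ v).
  - exact (bs_ctx p q [] v u u' Hu).
  - pose proof (bs_ctx p q u' [] v v' Hv) as H; rewrite !app_nil_r in H; exact H.
Qed.

Lemma apow_succ N : apow N ++ [A] =~ apow (Z.succ N).
Proof.
  unfold apow; destruct (Z.leb_spec 0 N), (Z.leb_spec 0 (Z.succ N)); try lia.
  - replace (Z.to_nat (Z.succ N)) with (S (Z.to_nat N)) by lia.
    cbn [repeat]; rewrite repeat_cons; reflexivity.
  - replace N with (-1)%Z by lia; exact (bs_cancel_ai p q).
  - replace (Z.to_nat (- N)) with (S (Z.to_nat (- Z.succ N))) by lia.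
    cbn [repeat]; rewrite repeat_cons, <- app_assoc; cbn [app].
    rewrite (bs_cancel_ai p q), app_nil_r; reflexivity.
Qed.

Lemma apow_pred N : apow N ++ [Ai] =~ apow (Z.pred N).
Proof.
  rewrite <- (Z.succ_pred N) at 1; rewrite <- apow_succ, <- app_assoc; cbn [app].
  rewrite (bs_cancel_a p q), app_nil_r; reflexivity.
Qed.

Lemma apow_add M N : apow M ++ apow N =~ apow (M + N).
Proof.
  revert N; apply Z.peano_ind.
  - rewrite app_nil_r, Z.add_0_r; reflexivity.
  - intros N IH; rewrite <- apow_succ, app_assoc, IH, apow_succ, Z.add_succ_r; reflexivity.
  - intros N IH; rewrite <- apow_pred, app_assoc, IH, apow_pred, Z.add_pred_r; reflexivity.
Qed.

Lemma apow_of_nat n : apow (Z.of_nat n) = repeat A n.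
Proof. unfold apow; destruct (Z.leb_spec 0 (Z.of_nat n)); [now rewrite Nat2Z.id | lia]. Qed.

Lemma length_apow N : length (apow N) = Z.to_nat (Z.abs N).
Proof. unfold apow; destruct (Z.leb_spec 0 N); rewrite repeat_length; f_equal; lia. Qed.

(** [a^(tmod c)] commutes past [tletter c] to [a^(tmod (negb c))]. *)
Definition tmod (c : bool) : Z := Z.of_nat (if c then q else p).

Lemma tletter_cancel c : [tletter (negb c); tletter c] =~ [].
Proof. destruct c; [exact (bs_cancel_ti p q) | exact (bs_cancel_t p q)]. Qed.

Lemma apow_q_T : apow (Z.of_nat q) ++ [T] =~ [T] ++ apow (Z.of_nat p).
Proof.
  rewrite !apow_of_nat, <- (bs_rel p q).
  transitivity ([T] ++ repeat A p ++ [Ti; T]); [rewrite <- !app_assoc; reflexivity |].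
  rewrite (bs_cancel_ti p q), app_nil_r; reflexivity.
Qed.

Lemma apow_mul_T k : apow (Z.of_nat q * k) ++ [T] =~ [T] ++ apow (Z.of_nat p * k).
Proof.
  revert k; apply Z.peano_ind.
  - rewrite !Z.mul_0_r; reflexivity.
  - intros k IH; rewrite !Z.mul_succ_r.
    rewrite <- apow_add, <- app_assoc, apow_q_T, app_assoc, IH, <- app_assoc, apow_add.
    reflexivity.
  - intros k IH; rewrite !Z.mul_pred_r.
    transitivity (apow (Z.of_nat q * k - Z.of_nat q) ++ [T]
                    ++ (apow (Z.of_nat p) ++ apow (- Z.of_nat p))).
    { rewrite apow_add, Z.add_opp_diag_r, app_nil_r; reflexivity. }
    rewrite (app_assoc [T]), <- apow_q_T, !app_assoc, apow_add.
    replace (Z.of_nat q * k - Z.of_nat q + Z.of_nat q)%Z with (Z.of_nat q * k)%Z by ring.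
    rewrite IH, <- app_assoc, apow_add; reflexivity.
Qed.

Lemma T_apow_mul_Ti k : [T] ++ apow (Z.of_nat p * k) ++ [Ti] =~ apow (Z.of_nat q * k).
Proof.
  rewrite app_assoc, <- apow_mul_T, <- app_assoc; cbn [app].
  rewrite (bs_cancel_t p q), app_nil_r; reflexivity.
Qed.

Lemma apow_mul_tletter c k :
  apow (tmod c * k) ++ [tletter c] =~ [tletter c] ++ apow (tmod (negb c) * k).
Proof.
  destruct c; [exact (apow_mul_T k) |]; cbn [tletter tmod negb].
  transitivity ([Ti] ++ ([T] ++ apow (Z.of_nat p * k) ++ [Ti])).
  - rewrite app_assoc, (bs_cancel_ti p q); reflexivity.
  - rewrite T_apow_mul_Ti; reflexivity.
Qed.

Lemma tmod_pos c : (0 < tmod c)%Z.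
Proof. destruct c; unfold tmod; lia. Qed.

Lemma block_ok_tmod c i : block_ok p q (c, i) <-> (Z.of_nat i < tmod c)%Z.
Proof. unfold tmod; destruct c; cbn; split; lia. Qed.

(** A state [(rb, N)] stands for the word [w a^N], where [rb] lists the blocks
    of [w] in reverse order. *)
Local Notation state := (list block * Z)%type.

Definition state_word (s : state) : word := blocks_word (rev (fst s)) ++ apow (snd s).

Definition rev_normal (rb : list block) : Prop := normal_blocks p q (rev rb).

Lemma rev_normal_cons b rb : rev_normal (b :: rb) <->
  block_ok p q b /\ rev_normal rb /\ match rb with [] => True | b' :: _ => no_cancel b' b end.
Proof.
  unfold rev_normal; rewrite !normal_blocks_iff; cbn [rev].
  rewrite Forall_app, Forall_cons_iff.
  assert (Forall (block_ok p q) [] /\ LocallySorted no_cancel []) by (split; constructor).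
  destruct rb as [|b' rb]; cbn [rev app].
  - assert (LocallySorted no_cancel [b]) by apply LSorted_cons1; tauto.
  - rewrite <- app_assoc; cbn [app]; rewrite LocallySorted_app2, Forall_app; tauto.
Qed.

(** Right multiplication by [tletter c]: write [N = tmod c * k + i]; then
    [a^N t^c = a^i t^c a^(tmod (negb c) * k)], and the block [a^i t^c] either
    cancels against a last block [t^-c] (when [i = 0]) or is pushed. *)
Definition tstep (c : bool) (s : state) : state :=
  let '(rb, N) := s in
  let k := (N / tmod c)%Z in
  let i := (N mod tmod c)%Z in
  match rb with
  | (c', j) :: rb' =>
      if andb (i =? 0)%Z (xorb c c') then (rb', Z.of_nat j + tmod (negb c) * k)%Z
      else ((c, Z.to_nat i) :: rb, tmod (negb c) * k)%Z
  | [] => ((c, Z.to_nat i) :: rb, tmod (negb c) * k)%Z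
  end.

Variant tstep_spec (c : bool) (rb : list block) (N : Z) : state -> Prop :=
  | TstepPop (j : nat) (rb' : list block) :
      rb = (negb c, j) :: rb' -> (N mod tmod c = 0)%Z ->
      tstep_spec c rb N (rb', Z.of_nat j + tmod (negb c) * (N / tmod c))%Z
  (* The cast types the pushed list as [list block] syntactically, so that
     [destruct (tstepP ..)] on it can abstract the goal's [tstep] term. *)
  | TstepPush :
      (forall (j : nat) (rb' : list block), rb = (negb c, j) :: rb' -> N mod tmod c <> 0)%Z ->
      tstep_spec c rb N (((c, Z.to_nat (N mod tmod c)) : block) :: rb,
                         tmod (negb c) * (N / tmod c))%Z.

Lemma tstepP c rb N : tstep_spec c rb N (tstep c (rb, N)).
Proof.
  unfold tstep; destruct rb as [|[c' j] rb']; [apply TstepPush; discriminate |].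
  destruct (andb (N mod tmod c =? 0)%Z (xorb c c')) eqn:E.
  - apply andb_prop in E as [E1 E2]; apply Z.eqb_eq in E1.
    replace c' with (negb c) by (destruct c, c'; easy).
    now apply TstepPop.
  - apply TstepPush; intros j0 rb0 H; injection H as Hc _ _; subst c'.
    replace (xorb c (negb c)) with true in E by (destruct c; reflexivity).
    now rewrite andb_true_r, Z.eqb_neq in E.
Qed.

Lemma tstep_rev_normal c rb N : rev_normal rb -> rev_normal (fst (tstep c (rb, N))).
Proof.
  intro V; destruct (tstepP c rb N) as [j rb' -> _ | Hpush]; cbn [fst].
  - now apply rev_normal_cons in V.
  - assert (B := Z.mod_pos_bound N (tmod c) (tmod_pos c)).
    apply rev_normal_cons; split; [apply block_ok_tmod; lia | split; [exact V |]].
    destruct rb as [|[c' j] rb']; [exact I |]; unfold no_cancel; cbn [fst snd]; intro Hi.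
    destruct c, c'; try reflexivity; exfalso; apply (Hpush j rb' eq_refl); lia.
Qed.

Lemma tstep_add_mul c rb N d :
  tstep c (rb, N + tmod c * d)%Z =
  (fst (tstep c (rb, N)), snd (tstep c (rb, N)) + tmod (negb c) * d)%Z.
Proof.
  assert (Hm := tmod_pos c); unfold tstep.
  rewrite (Z.mul_comm (tmod c) d), Z.div_add, Z.mod_add by lia.
  destruct rb as [|[c' j] rb']; [| destruct (andb _ _)]; cbn [fst snd];
    now rewrite Z.mul_add_distr_l, ?Z.add_assoc.
Qed.

Lemma tstep_negb_tstep c rb N : rev_normal rb -> tstep (negb c) (tstep c (rb, N)) = (rb, N).
Proof.
  intro V; assert (Hm := tmod_pos c); assert (Hn := tmod_pos (negb c)).
  assert (E := Z.div_mod N (tmod c) ltac:(lia)).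
  destruct (tstepP c rb N) as [j rb' -> Hi | _].
  - apply rev_normal_cons in V as [Hj [_ Hnc]]; apply block_ok_tmod in Hj.
    destruct (Z_div_mod_mul_add (tmod (negb c)) (N / tmod c) (Z.of_nat j)) as [Hd Hr]; [lia |].
    rewrite Z.add_comm.
    destruct (tstepP (negb c) rb' (tmod (negb c) * (N / tmod c) + Z.of_nat j))
      as [j' rb'' -> Hi' | _]; rewrite ?Hd, ?Hr, ?Nat2Z.id in *.
    + exfalso; rewrite Bool.negb_involutive in Hnc.
      specialize (Hnc ltac:(cbn; lia)); destruct c; discriminate.
    + rewrite Hi, Z.add_0_r in E; rewrite Bool.negb_involutive, <- E; reflexivity.
  - destruct (Z_div_mod_mul_add (tmod (negb c)) (N / tmod c) 0) as [Hd Hr]; [lia |].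
    rewrite Z.add_0_r in Hd, Hr.
    destruct (tstepP (negb c) (((c, Z.to_nat (N mod tmod c)) : block) :: rb)
                (tmod (negb c) * (N / tmod c))) as [j rb' Hrb _ | Hpush].
    + injection Hrb; intros; subst rb' j; rewrite Hd.
      assert (B := Z.mod_pos_bound N (tmod c) Hm).
      rewrite Z2Nat.id, Bool.negb_involutive, Z.add_comm, <- E by lia; reflexivity.
    + exfalso; apply (Hpush (Z.to_nat (N mod tmod c)) rb); [| exact Hr].
      now rewrite Bool.negb_involutive.
Qed.

Lemma state_word_tstep c rb N : state_word (rb, N) ++ [tletter c] =~ state_word (tstep c (rb, N)).
Proof.
  assert (E := Z.div_mod N (tmod c) (Z.neq_sym _ _ (Z.lt_neq _ _ (tmod_pos c)))).
  assert (B := Z.mod_pos_bound N (tmod c) (tmod_pos c)).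
  assert (Hsplit : apow N ++ [tletter c] =~
    apow (N mod tmod c) ++ [tletter c] ++ apow (tmod (negb c) * (N / tmod c))).
  { rewrite E at 1; rewrite Z.add_comm, <- apow_add, <- app_assoc, apow_mul_tletter.
    reflexivity. }
  unfold state_word; cbn [fst snd]; rewrite <- app_assoc, Hsplit.
  destruct (tstepP c rb N) as [j rb' -> Hi | _]; cbn [fst snd rev].
  - rewrite blocks_word_app, blocks_word_cons, block_word_tletter; cbn [blocks_word map concat].
    rewrite Hi, <- apow_add, apow_of_nat, !app_nil_r, <- !app_assoc.
    apply app_bs_eq_Proper; [reflexivity |]; apply app_bs_eq_Proper; [reflexivity |].
    change (apow 0) with (@nil letter); rewrite app_assoc.
    exact (app_bs_eq_Proper _ _ (tletter_cancel c) _ _ (reflexivity _)).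
  - rewrite blocks_word_app, blocks_word_cons, block_word_tletter; cbn [blocks_word map concat].
    rewrite <- apow_of_nat, Z2Nat.id, !app_nil_r, <- !app_assoc by lia; reflexivity.
Qed.

Definition act_letter (x : letter) (s : state) : state :=
  match x with
  | A => (fst s, snd s + 1)%Z
  | Ai => (fst s, snd s - 1)%Z
  | T => tstep true s
  | Ti => tstep false s
  end.

Definition act (u : word) (s : state) : state := fold_left (fun s x => act_letter x s) u s.

Lemma act_cons x u s : act (x :: u) s = act u (act_letter x s).
Proof. reflexivity. Qed.

Lemma act_app u v s : act (u ++ v) s = act v (act u s).
Proof. apply fold_left_app. Qed.

Lemma act_letter_tletter c s : act_letter (tletter c) s = tstep c s.
Proof. now destruct c. Qed.

Lemma act_letter_rev_normal x s : rev_normal (fst s) -> rev_normal (fst (act_letter x s)).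
Proof. destruct s, x; [exact (fun V => V) .. | apply tstep_rev_normal | apply tstep_rev_normal].
Qed.

Lemma act_rev_normal u s : rev_normal (fst s) -> rev_normal (fst (act u s)).
Proof.
  revert s; induction u as [|x u IH]; intros s V; [exact V |].
  apply IH, act_letter_rev_normal, V.
Qed.

Lemma act_repeat x n d rb N :
  (forall M, act_letter x (rb, M) = (rb, M + d)%Z) ->
  act (repeat x n) (rb, N) = (rb, N + Z.of_nat n * d)%Z.
Proof.
  intro Hx; revert N; induction n as [|n IH]; intro N; [cbn; f_equal; lia |].
  cbn [repeat]; rewrite act_cons, Hx, IH; f_equal; lia.
Qed.

Lemma act_apow M rb N : act (apow M) (rb, N) = (rb, N + M)%Z.
Proof.
  unfold apow; destruct (Z.leb_spec 0 M).
  - rewrite (act_repeat A _ 1) by reflexivity; f_equal; lia.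
  - rewrite (act_repeat Ai _ (-1)) by (intro; cbn; f_equal; lia); f_equal; lia.
Qed.

Lemma act_bs_eq u v : u =~ v -> forall s, rev_normal (fst s) -> act u s = act v s.
Proof.
  induction 1 as [| u v _ IH | u v w _ IH1 _ IH2 | l r u v _ IH | | | | |];
    intros [rb N] V.
  - reflexivity.
  - symmetry; auto.
  - rewrite IH1 by exact V; auto.
  - rewrite !act_app, (IH _ (act_rev_normal l _ V)); reflexivity.
  - cbn; f_equal; lia.
  - cbn; f_equal; lia.
  - exact (tstep_negb_tstep true rb N V).
  - exact (tstep_negb_tstep false rb N V).
  - rewrite act_app, act_app; cbn [act fold_left act_letter].
    fold (act (repeat A p)); fold (act (repeat A q)).
    pose proof (tstep_negb_tstep true rb N V) as Hinv; cbn [negb] in Hinv.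
    destruct (tstep true (rb, N)) as [rb1 N1].
    rewrite (act_repeat A p 1), (act_repeat A q 1), !Z.mul_1_r by reflexivity.
    change (Z.of_nat p) with (tmod false); change (Z.of_nat q) with (tmod true).
    rewrite <- (Z.mul_1_r (tmod false)), tstep_add_mul, Hinv, Z.mul_1_r; reflexivity.
Qed.

Lemma state_word_act_letter x s : state_word s ++ [x] =~ state_word (act_letter x s).
Proof.
  destruct s as [rb N]; unfold state_word; destruct x; cbn [act_letter fst snd].
  - rewrite <- app_assoc, apow_succ, Z.add_1_r; reflexivity.
  - rewrite <- app_assoc, apow_pred, Z.sub_1_r; reflexivity.
  - exact (state_word_tstep true rb N).
  - exact (state_word_tstep false rb N).
Qed.

Lemma state_word_act u : u =~ state_word (act u ([], 0%Z)).
Proof.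
  induction u as [|u x IH] using rev_ind; [reflexivity |].
  rewrite act_app, IH at 1; apply state_word_act_letter.
Qed.

Lemma rev_normal_nil : rev_normal [].
Proof. unfold rev_normal; cbn [rev]; apply normal_blocks_iff; split; constructor. Qed.

Lemma rev_normal_app l rb : rev_normal (l ++ rb) -> rev_normal rb.
Proof. induction l as [|b l IH]; [easy |]; intro V; apply IH, (rev_normal_cons b), V. Qed.

Lemma act_block b rb : rev_normal (b :: rb) -> act (block_word b) (rb, 0%Z) = (b :: rb, 0%Z).
Proof.
  destruct b as [c i]; intro V; apply rev_normal_cons in V as [Hi [_ Hnc]].
  apply block_ok_tmod in Hi.
  rewrite block_word_tletter, act_app, (act_repeat A i 1), act_cons, act_letter_tletter
    by reflexivity; cbn [act fold_left]; rewrite Z.mul_1_r, Z.add_0_l.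
  destruct (Z_div_mod_mul_add (tmod c) 0 (Z.of_nat i)) as [Hd Hr]; [lia |].
  rewrite Z.mul_0_r, Z.add_0_l in Hd, Hr.
  destruct (tstepP c rb (Z.of_nat i)) as [j rb' -> Hi0 | _].
  - exfalso; rewrite Hr in Hi0; specialize (Hnc ltac:(cbn; lia)); destruct c; discriminate.
  - rewrite Hd, Hr, Nat2Z.id, Z.mul_0_r; reflexivity.
Qed.

Lemma act_blocks_word bs rb :
  rev_normal (rev bs ++ rb) -> act (blocks_word bs) (rb, 0%Z) = (rev bs ++ rb, 0%Z).
Proof.
  revert rb; induction bs as [|b bs IH]; intros rb V; [reflexivity |].
  cbn [rev] in *; rewrite <- app_assoc in *; cbn [app] in *.
  rewrite blocks_word_cons, act_app, act_block by exact (rev_normal_app _ _ V).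
  exact (IH _ V).
Qed.

Lemma act_normal_form bs N :
  normal_blocks p q bs -> act (blocks_word bs ++ apow N) ([], 0%Z) = (rev bs, N).
Proof.
  intro Hn; rewrite act_app, act_blocks_word, act_apow, app_nil_r; [reflexivity |].
  unfold rev_normal; rewrite app_nil_r, rev_involutive; exact Hn.
Qed.

Lemma normal_form_exists_unique u : exists! bN : list block * Z,
  normal_blocks p q (fst bN) /\ u =~ blocks_word (fst bN) ++ apow (snd bN).
Proof.
  exists (rev (fst (act u ([], 0%Z))), snd (act u ([], 0%Z))); split.
  - split; [exact (act_rev_normal u ([], 0%Z) rev_normal_nil) | apply state_word_act].
  - intros [bs N] [Hn He]; cbn [fst snd] in *.
    rewrite (act_bs_eq _ _ He ([], 0%Z) rev_normal_nil), act_normal_form by exact Hn.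
    cbn; rewrite rev_involutive; reflexivity.
Qed.

Lemma wlen_spec u : is_word_length p q u (wlen p q u).
Proof.
  unfold wlen; apply epsilon_spec.
  destruct (dec_inh_nat_subset_has_unique_least_element
              (fun n => exists v, u =~ v /\ length v = n) (fun n => classic _)
              (ex_intro _ (length u) (ex_intro _ u (conj (reflexivity u) eq_refl))))
    as [n [[Hn Hmin] _]].
  exists n; split; [exact Hn |].
  intros v Hv; exact (Hmin _ (ex_intro _ v (conj Hv eq_refl))).
Qed.

Lemma wlen_le u v : u =~ v -> (wlen p q u <= length v)%nat.
Proof. apply (proj2 (wlen_spec u)). Qed.

Lemma wlen_geodesic u : exists v, u =~ v /\ length v = wlen p q u.
Proof. apply (proj1 (wlen_spec u)). Qed.

Lemma tmod_le_q c : (tmod c <= Z.of_nat q)%Z.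
Proof. destruct c; unfold tmod; lia. Qed.

Lemma tstep_growth c rb N : rev_normal rb ->
  (length (fst (tstep c (rb, N))) <= S (length rb))%nat /\
  (Z.abs (snd (tstep c (rb, N))) + 1 <= Z.of_nat q * (Z.abs N + 1))%Z.
Proof.
  intro V; assert (Hn := tmod_pos (negb c)); assert (Hnq := tmod_le_q (negb c)).
  assert (Hk := Z_abs_div_le N (tmod c) (tmod_pos c)).
  assert (Hnk : (Z.abs (tmod (negb c) * (N / tmod c)) <= Z.of_nat q * Z.abs N)%Z).
  { rewrite Z.abs_mul, (Z.abs_eq (tmod (negb c))) by lia; nia. }
  destruct (tstepP c rb N) as [j rb' -> _ | _]; cbn [fst snd length].
  - apply rev_normal_cons, proj1, block_ok_tmod in V; lia.
  - lia.
Qed.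

Lemma act_letter_growth x rb N : rev_normal rb ->
  (length (fst (act_letter x (rb, N))) <= S (length rb))%nat /\
  (Z.abs (snd (act_letter x (rb, N))) + 1 <= Z.of_nat q * (Z.abs N + 1))%Z.
Proof.
  intro V; destruct x; cbn [act_letter fst snd];
    [split; [lia | nia] .. | apply tstep_growth, V | apply tstep_growth, V].
Qed.

Lemma act_growth u rb N : rev_normal rb ->
  (length (fst (act u (rb, N))) <= length rb + length u)%nat /\
  (Z.abs (snd (act u (rb, N))) + 1 <= (Z.abs N + 1) * Z.of_nat (q ^ length u))%Z.
Proof.
  revert rb N; induction u as [|x u IH]; intros rb N V; [cbn; lia |].
  rewrite act_cons; destruct (act_letter x (rb, N)) as [rb1 N1] eqn:E.
  destruct (act_letter_growth x rb N V) as [G1 G2]; rewrite E in G1, G2; cbn [fst snd] in G1, G2.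
  assert (V1 := act_letter_rev_normal x (rb, N) V); rewrite E in V1.
  destruct (IH rb1 N1 V1) as [H1 H2]; cbn [length]; rewrite Nat.pow_succ_r', Nat2Z.inj_mul.
  assert (0 <= Z.of_nat (q ^ length u))%Z by lia; split; nia.
Qed.

Lemma blocks_word_length bs :
  Forall (block_ok p q) bs -> (length (blocks_word bs) <= q * length bs)%nat.
Proof.
  induction 1 as [|[c i] bs Hb _ IH]; [cbn; lia |].
  rewrite blocks_word_cons, length_app, block_word_tletter, length_app, repeat_length.
  destruct c; cbn [block_ok length] in *; lia.
Qed.

Definition signed (s : bool) (n : nat) : Z := if s then Z.of_nat n else (- Z.of_nat n)%Z.

Fixpoint short_apow (j : nat) (s : bool) (n : nat) : word :=
  match j with
  | O => apow (signed s n)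
  | S j' =>
      if (n <? q)%nat then apow (signed s n)
      else [T] ++ short_apow j' s (p * (n / q)) ++ [Ti] ++ apow (signed s (n mod q))
  end.

Lemma short_apow_bs_eq j s n : short_apow j s n =~ apow (signed s n).
Proof.
  revert n; induction j as [|j IH]; intro n; cbn [short_apow]; [reflexivity |].
  destruct (n <? q)%nat; [reflexivity |].
  assert (Hd := Nat.div_mod n q ltac:(lia)).
  rewrite IH.
  replace (signed s (p * (n / q))) with (Z.of_nat p * signed s (n / q))%Z
    by (destruct s; cbn; lia).
  transitivity (([T] ++ apow (Z.of_nat p * signed s (n / q)) ++ [Ti])
                  ++ apow (signed s (n mod q))); [rewrite <- !app_assoc; reflexivity |].
  rewrite T_apow_mul_Ti, apow_add.
  replace (Z.of_nat q * signed s (n / q) + signed s (n mod q))%Z with (signed s n)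
    by (destruct s; cbn; lia).
  reflexivity.
Qed.

Lemma short_apow_length j s n :
  (n * p ^ j < q ^ S j)%nat -> (length (short_apow j s n) <= (q + 2) * j + q)%nat.
Proof.
  assert (Hsigned : forall n, length (apow (signed s n)) = n)
    by (intro m; rewrite length_apow; destruct s; cbn; lia).
  revert n; induction j as [|j IH]; intros n Hn; cbn [short_apow].
  - rewrite Hsigned; cbn in Hn; lia.
  - destruct (Nat.ltb_spec n q); [rewrite Hsigned; lia |].
    rewrite !length_app, Hsigned; cbn [length].
    assert (Hm := Nat.mod_upper_bound n q ltac:(lia)).
    enough (Hk : (p * (n / q) * p ^ j < q ^ S j)%nat) by (specialize (IH _ Hk); lia).
    apply (Nat.mul_lt_mono_pos_l q); [lia |].
    replace (q * (p * (n / q) * p ^ j))%nat with (q * (n / q) * p ^ S j)%nat by (cbn; ring).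
    eapply Nat.le_lt_trans; [apply Nat.mul_le_mono_r, Nat.Div0.mul_div_le |].
    exact Hn.
Qed.

Local Open Scope R_scope.

Lemma wlen_lower_bound bs N : normal_blocks p q bs ->
  INR (length (blocks_word bs)) + ln (IZR (Z.abs N) + 1)
    <= (INR q + ln (INR q)) * INR (wlen p q (blocks_word bs ++ apow N)).
Proof.
  intro Hn; set (x := blocks_word bs ++ apow N).
  destruct (wlen_geodesic x) as [v [Hv Hlen]].
  assert (Hact : act v ([], 0%Z) = (rev bs, N)).
  { rewrite <- (act_bs_eq _ _ Hv ([], 0%Z) rev_normal_nil); exact (act_normal_form bs N Hn). }
  destruct (act_growth v [] 0 rev_normal_nil) as [G1 G2].
  rewrite Hact, Hlen in *; cbn [fst snd length] in *; rewrite length_rev in G1.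
  set (n := wlen p q x) in *.
  assert (Hw : INR (length (blocks_word bs)) <= INR q * INR n).
  { rewrite <- mult_INR; apply le_INR.
    assert (H := blocks_word_length bs (proj1 Hn)); nia. }
  assert (Hln : ln (IZR (Z.abs N) + 1) <= INR n * ln (INR q)).
  { rewrite <- ln_pow by (apply lt_0_INR; lia).
    apply ln_le; [pose proof (IZR_le 0 _ (Z.abs_nonneg N)); lra |].
    rewrite <- pow_INR, INR_IZR_INZ, <- plus_IZR; apply IZR_le; lia. }
  lra.
Qed.

Lemma ln_q_minus_ln_p_pos : 0 < ln (INR q) - ln (INR p).
Proof.
  assert (0 < INR p) by (apply lt_0_INR; lia); assert (INR p < INR q) by (apply lt_INR; lia).
  assert (ln (INR p) < ln (INR q)) by (apply ln_increasing; assumption); lra.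
Qed.

Lemma short_apow_depth n : exists j : nat, (n * p ^ j < q ^ S j)%nat /\
  INR j <= ln (INR n + 1) / (ln (INR q) - ln (INR p)) + 1.
Proof.
  assert (HL := ln_q_minus_ln_p_pos); set (L := ln (INR q) - ln (INR p)) in *.
  assert (Hn1 : 1 <= INR n + 1) by (pose proof (pos_INR n); lra).
  set (x := ln (INR n + 1) / L).
  assert (Hx : 0 <= x).
  { apply Rmult_le_pos; [rewrite <- ln_1; apply ln_le; lra |].
    left; apply Rinv_0_lt_compat; exact HL. }
  destruct (archimed x) as [Hup1 Hup2].
  assert (Hj : INR (Z.to_nat (up x)) = IZR (up x))
    by (rewrite INR_IZR_INZ, Z2Nat.id; [reflexivity | apply le_IZR; lra]).
  exists (Z.to_nat (up x)); split; [| rewrite Hj; lra].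
  set (j := Z.to_nat (up x)) in *.
  assert (Hp0 : 0 < INR p) by (apply lt_0_INR; lia).
  assert (Hq0 : 0 < INR q) by (apply lt_0_INR; lia).
  assert (Hlt : (INR n + 1) * INR p ^ j < INR q ^ j).
  { apply ln_lt_inv; [apply Rmult_lt_0_compat; [lra | apply pow_lt; lra] | apply pow_lt; lra |].
    rewrite ln_mult, !ln_pow by (try apply pow_lt; lra).
    assert (x * L = ln (INR n + 1)) by (unfold x; field; lra).
    assert (x * L < INR j * L) by (apply Rmult_lt_compat_r; lra).
    unfold L in *; lra. }
  apply INR_lt; rewrite mult_INR, !pow_INR; cbn [pow].
  assert (1 <= INR q) by (apply (le_INR 1); lia).
  assert (0 < INR p ^ j) by (apply pow_lt; lra).
  assert (0 <= INR q ^ j) by (apply pow_le; lra).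
  assert (INR n * INR p ^ j < INR q ^ j) by nra; nra.
Qed.

Lemma apow_short_word N : exists v, apow N =~ v /\
  INR (length v) <= (INR q + 2) / (ln (INR q) - ln (INR p)) * ln (IZR (Z.abs N) + 1)
                    + 2 * INR q + 2.
Proof.
  set (n := Z.to_nat (Z.abs N)).
  assert (Hs : signed (0 <=? N)%Z n = N)
    by (unfold signed, n; destruct (Z.leb_spec 0 N); lia).
  assert (Hn : IZR (Z.abs N) = INR n)
    by (unfold n; rewrite INR_IZR_INZ, Z2Nat.id by lia; reflexivity).
  destruct (short_apow_depth n) as [j [Hj1 Hj2]].
  exists (short_apow j (0 <=? N)%Z n); split; [rewrite short_apow_bs_eq, Hs; reflexivity |].
  assert (Hlen := le_INR _ _ (short_apow_length j (0 <=? N)%Z n Hj1)).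
  rewrite plus_INR, !mult_INR, plus_INR in Hlen; cbn [INR] in Hlen.
  assert (HL := ln_q_minus_ln_p_pos); set (L := ln (INR q) - ln (INR p)) in *.
  rewrite Hn; assert (0 <= INR q) by apply pos_INR.
  replace ((INR q + 2) / L * ln (INR n + 1)) with (ln (INR n + 1) / L * (INR q + 2))
    by (field; lra).
  nra.
Qed.

Lemma wlen_upper_bound bs N :
  INR (wlen p q (blocks_word bs ++ apow N))
    <= INR (length (blocks_word bs))
       + (INR q + 2) / (ln (INR q) - ln (INR p)) * ln (IZR (Z.abs N) + 1) + 2 * INR q + 2.
Proof.
  destruct (apow_short_word N) as [v [Hv Hlen]].
  assert (H := le_INR _ _ (wlen_le (blocks_word bs ++ apow N) (blocks_word bs ++ v)
                             ltac:(rewrite Hv; reflexivity))).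
  rewrite length_app, plus_INR in H; lra.
Qed.
End BaumslagSolitar.

Open Scope R_scope.

Theorem theorem3p2 (p q : nat) (hp : (1 <= p)%nat) (hpq : (p < q)%nat) :
  (forall u : word, exists! bN : list block * Z,
      normal_blocks p q (fst bN) /\ bs_eq p q u (blocks_word (fst bN) ++ apow (snd bN)))
  /\
  exists C1 C2 D1 D2 : R, 0 < C1 /\ 0 < C2 /\ 0 < D1 /\ 0 < D2 /\
    forall (bs : list block) (N : Z), normal_blocks p q bs ->
      C1 * (INR (length (blocks_word bs)) + ln (IZR (Z.abs N) + 1)) - D1
        <= INR (wlen p q (blocks_word bs ++ apow N)) /\
      INR (wlen p q (blocks_word bs ++ apow N))
        <= C2 * (INR (length (blocks_word bs)) + ln (IZR (Z.abs N) + 1)) + D2.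
Proof.
  split; [exact (normal_form_exists_unique p q hp hpq) |].
  assert (Hq : 1 <= INR q) by (apply (le_INR 1); lia).
  assert (Hlnq : 0 <= ln (INR q)) by (rewrite <- ln_1; apply ln_le; lra).
  assert (HL := ln_q_minus_ln_p_pos p q hp hpq).
  set (K := (INR q + 2) / (ln (INR q) - ln (INR p))).
  assert (HK : 0 <= K) by (apply Rmult_le_pos; [lra | left; apply Rinv_0_lt_compat, HL]).
  set (c := INR q + ln (INR q)); assert (Hc : 0 < c) by (unfold c; lra).
  exists (/ c), (1 + K), 1, (2 * INR q + 3).
  split; [apply Rinv_0_lt_compat, Hc |]; do 3 (split; [lra |]).
  intros bs N Hn.
  assert (Hlow := wlen_lower_bound p q hp hpq bs N Hn).
  assert (Hup := wlen_upper_bound p q hp hpq bs N).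
  fold K c in Hlow, Hup.
  set (w := INR (length (blocks_word bs))) in *; set (l := ln (IZR (Z.abs N) + 1)) in *.
  set (n := INR (wlen p q (blocks_word bs ++ apow N))) in *.
  assert (0 <= w) by apply pos_INR.
  assert (0 <= l) by apply ln_abs_add_1_nonneg.
  split.
  - assert (/ c * (w + l) <= n); [| lra].
    replace n with (/ c * (c * n)) by (field; lra).
    apply Rmult_le_compat_l; [left; apply Rinv_0_lt_compat |]; lra.
  - nra.
Qed.
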